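(* Let $\mathcal A=(Q,\Sigma,\delta,\rho)$ be a connected bireversible Mealy automaton whose labeled orbit tree $\mathfrak t(\mathcal A)$ has no active self-liftable branch, and let $\mathfrak j$ be a jungle tree of $\mathfrak t(\mathcal A)$. Then the relation $\sim$ on the set of stems of $\mathfrak j$ is an equivalence relation.
   Context: Mealy automata. A Mealy automaton is $\mathcal A=(Q,\Sigma,\delta,\rho)$ with $Q,\Sigma$ finite non-empty sets, $\delta=(\delta_i\colon Q\to Q)_{i\in\Sigma}$, $\rho=(\rho_x\colon\Sigma\to\Sigma)_{x\in Q}$; transitions $x\xrightarrow{i\mid\rho_x(i)}\delta_i(x)$. Invertible: each $\rho_x$ a permutation of $\Sigma$; reversible: each $\delta_i$ a permutation of $Q$; bireversible: invertible, reversible, and for each $j\in\Sigma$ the map $x\mapsto\delta_{\rho_x^{-1}(j)}(x)$ is a permutation of $Q$. Connected: the directed graph on $Q$ with edges $x\to\delta_i(x)$ is connected. Extensions: $\rho_x(i\mathbf s)=\rho_x(i)\rho_{\delta_i(x)}(\mathbf s)$ on $\Sigma^*$; $\rho_{x_1\cdots x_m}=\rho_{x_m}\circ\cdots\circ\rho_{x_1}$ (and $\rho$ of the empty word is the identity); dually $\delta_i(x\mathbf u)=\delta_i(x)\delta_{\rho_x(i)}(\mathbf u)$ on $Q^*$, $\delta_{i_1\cdots i_m}=\delta_{i_m}\circ\cdots\circ\delta_{i_1}$. The connected components of the $n$-th power $\mathcal A^n$ (stateset $Q^n$, transitions $\mathbf u\xrightarrow{i\mid\rho_{\mathbf u}(i)}\delta_i(\mathbf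 u)$) are, for reversible $\mathcal A$, the orbits of $Q^n$ under the maps $\delta_{\mathbf s}$. Orbit tree $\mathfrak t(\mathcal A)$: vertices at level $n\ge0$ are the connected components of $\mathcal A^n$; an edge from the component of $\mathbf u\in Q^n$ to that of $\mathbf ux$ for all $\mathbf u,x$; edge $C\to D$ labeled $\#D/\#C$. $\top,\bot$ = first/last vertex of a downward path; level of an edge/path = level of its top vertex. A word of $Q^*\cup Q^\omega$ represents the initial path through the components of its prefixes. Edge $e$ is liftable to $f$ if every word of $\bot(e)$ has a suffix in $\bot(f)$; paths $(e_i)_{i\in I}$, $(f_i)_{i\in I}$: liftable if each $e_i$ is liftable to $f_i$. $f$ is a legitimate child of $e$ if $\top(f)=\bot(e)$ and $f$ is liftable to $e$. A path/subtree $\mathfrak s$ is $k$-self-liftable if for all $i\ge0$ every path in $\mathfrak s$ starting at level $i+k$ is liftable to a path in $\mathfrak s$ starting at level $i$; self-liftable if $k$-self-liftable for some $k>0$. A branch (infinite initial path) is active if its labels are not eventually all $1$. Jungle trees: for a finite 1-self-liftable initial path $\mathbf e$ of length $n$ whose last edge has at least two legitimate children, all labeled $1$, $\mathfrak j(\mathbf e)$ consists of $\mathbf e$ plus all edges descending from $\bot(\mathbf e)$ that are liftable to the last edge of $\mathbf e$. Stems: the words of $\bot(\mathbf e)\subseteq Q^n$. A $\mathfrak j$-word is a word representing an initial path of $\mathfrak j$. For stems $\mathbf u,\mathbf v$: $\mathbf u\sim\mathbf v$ iff there is $\mathbf s\in Q^*$ such that $\mathbf{usv}$ is a $\mathfrak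 j$-word and $\rho_{\mathbf{us}}$ is the identity of $\Sigma^*$. *)

From mathcomp Require Import all_boot.
From mathcomp Require Import boolp.
From Stdlib Require Import Relations.Relation_Operators.

Set Implicit Arguments.
Unset Strict Implicit.
Unset Printing Implicit Defensive.

Section Mealy.
Variables (Q S : finType).
(* delta i : Q -> Q  (transition on input letter i);  rho x : S -> S (output) *)
Variables (delta : S -> Q -> Q) (rho : Q -> S -> S).

Fixpoint rho_word (x : Q) (s : seq S) : seq S :=
  match s with
  | [::] => [::]
  | i :: s' => rho x i :: rho_word (delta i x) s'
  end.

Definition rho_states (u : seq Q) (s : seq S) : seq S :=
  foldl (fun t x => rho_word x t) s u.

Fixpoint delta_word (i : S) (u : seq Q) : seq Q :=
  match u with
  | [::] => [::]
  | x :: u' => delta i x :: delta_word (rho x i) u'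
  end.

(* inverse of rho_x (the genuine inverse when rho_x is a permutation) *)
Definition rho_inv (x : Q) (j : S) : S := odflt j [pick i | rho x i == j].

Definition invertible : Prop := forall x, injective (rho x).
Definition reversible : Prop := forall i, injective (delta i).
Definition bireversible : Prop :=
  [/\ invertible, reversible & forall j, injective (fun x => delta (rho_inv x j) x)].

Definition connected_automaton : Prop :=
  forall x y, clos_refl_sym_trans Q (fun a b => exists i, b = delta i a) x y.

(* u and v lie in the same connected component of the power A^n
   (transitions u -> delta_i(u)) *)
Definition same_comp (u v : seq Q) : Prop :=
  clos_refl_sym_trans (seq Q) (fun a b => exists i, b = delta_word i a) u v.

(* cardinality of the component of u (a vertex of the orbit tree) *)
Definition comp_card (u : seq Q) : nat :=
  #|[set t : (size u).-tuple Q | `[< same_comp u (val t) >]]|.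

(* An edge of the orbit tree is represented by a (non-empty) word b of its
   bottom vertex; its top vertex is the component of (take (size b).-1 b). *)
Definition label_one (b : seq Q) : Prop :=
  comp_card b = comp_card (take (size b).-1 b).

(* edge with bottom word a is liftable to edge with bottom word b *)
Definition liftable_edge (a b : seq Q) : Prop :=
  forall w, same_comp a w -> exists p w', w = p ++ w' /\ same_comp b w'.

(* branches, represented by infinite words W *)
Definition pref (W : nat -> Q) (n : nat) : seq Q := mkseq W n.

Definition active_branch (W : nat -> Q) : Prop :=
  ~ (exists N, forall j, N <= j -> label_one (pref W j.+1)).

(* for a branch, the paths in it starting at level m+k are its segments, and
   liftability of paths is edgewise *)
Definition k_self_liftable_branch (k : nat) (W : nat -> Q) : Prop :=
  forall m, liftable_edge (pref W (m + k).+1) (pref W m.+1).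

Definition self_liftable_branch (W : nat -> Q) : Prop :=
  exists k, 0 < k /\ k_self_liftable_branch k W.

Definition no_active_self_liftable_branch : Prop :=
  forall W, ~ (active_branch W /\ self_liftable_branch W).

(* Jungle trees.  A finite initial path of length n is represented by a word
   ew of length n (its bottom vertex is the component of ew). *)
Definition one_self_liftable_path (ew : seq Q) : Prop :=
  forall m, m.+1 < size ew -> liftable_edge (take m.+2 ew) (take m.+1 ew).

Definition legit_child (ew b : seq Q) : Prop :=
  [/\ size b = (size ew).+1, same_comp (take (size ew) b) ew & liftable_edge b ew].

Definition jungle_path (ew : seq Q) : Prop :=
  [/\ 0 < size ew,
      one_self_liftable_path ew,
      (exists b1 b2, [/\ legit_child ew b1, legit_child ew b2 & ~ same_comp b1 b2])
    & (forall b, legit_child ew b -> label_one b)].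

(* the edge with bottom word b belongs to the jungle tree j(ew): it is an edge
   of the path ew, or it descends from the bottom of ew and is liftable to the
   last edge of ew *)
Definition in_jungle (ew b : seq Q) : Prop :=
  (size b <= size ew /\ same_comp b (take (size b) ew)) \/
  [/\ size ew < size b, same_comp (take (size ew) b) ew & liftable_edge b ew].

Definition jword (ew w : seq Q) : Prop :=
  forall j, 0 < j <= size w -> in_jungle ew (take j w).

Definition stem (ew u : seq Q) : Prop := same_comp ew u.

Definition stem_rel (ew u v : seq Q) : Prop :=
  exists s : seq Q, jword ew (u ++ s ++ v) /\
    forall t : seq S, rho_states (u ++ s) t = t.

End Mealy.

From mathcomp Require Import all_boot boolp zify.
From Stdlib Require Import Relations.Relation_Operators.

Set Implicit Arguments.
Unset Strict Implicit.
Unset Printing Implicit Defensive.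

(* A stem is a length-n word of the component C of the bottom vertex of the
   jungle path, and a j-word starting with a stem is exactly a word all of whose
   length-n windows lie in C: a walk in the graph on C whose edges are the
   length-(n+1) words with both windows in C.  Transitivity is concatenation of
   walks.  Bireversibility makes the in- and out-degrees of this graph equal and
   constant on C, so by double counting every walk can be reversed, and every
   stem lies on a closed walk.  Since no active branch is self-liftable, the
   periodic branch w w w ... has labels eventually 1, which forces rho_w to have
   finite order D; going D times around a closed walk through a stem u yields
   a word s with rho_{us} the identity. *)

Section Words.
Variables (Q S : finType) (delta : S -> Q -> Q) (rho : Q -> S -> S).

Local Notation rw := (rho_word delta rho).
Local Notation dw := (delta_word delta rho).
Local Notation rs := (rho_states delta rho).
Local Notation sc := (same_comp delta rho).

Definition delta_states (t : seq S) (u : seq Q) : seq Q :=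
  foldl (fun u i => dw i u) u t.
Local Notation ds := delta_states.

Definition out_letter (u : seq Q) (i : S) : S := foldl (fun i x => rho x i) i u.

Lemma size_delta_word i u : size (dw i u) = size u.
Proof. by elim: u i => //= x u IH i; rewrite IH. Qed.

Lemma size_delta_states t u : size (ds t u) = size u.
Proof. by elim: t u => //= i t IH u; rewrite IH size_delta_word. Qed.

Lemma size_rho_word x s : size (rw x s) = size s.
Proof. by elim: s x => //= i s IH x; rewrite IH. Qed.

Lemma size_rho_states u s : size (rs u s) = size s.
Proof. by elim: u s => //= x u IH s; rewrite /rho_states /= -/(rs u _) IH size_rho_word. Qed.

Lemma rho_states1 x s : rs [:: x] s = rw x s.
Proof. by []. Qed.

Lemma rho_states_cat u v s : rs (u ++ v) s = rs v (rs u s).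
Proof. by rewrite /rho_states foldl_cat. Qed.

Lemma delta_states_cat t t' u : ds (t ++ t') u = ds t' (ds t u).
Proof. by rewrite /delta_states foldl_cat. Qed.

Lemma rho_states_nil u : rs u [::] = [::].
Proof. by elim: u. Qed.

Lemma delta_states_nil t : ds t [::] = [::].
Proof. by elim: t. Qed.

Lemma delta_word_cat i u v : dw i (u ++ v) = dw i u ++ dw (out_letter u i) v.
Proof. by elim: u i => //= x u IH i; rewrite IH. Qed.

Lemma rho_states_cons u i t : rs u (i :: t) = out_letter u i :: rs (dw i u) t.
Proof. by elim: u i t => //= x u IH i t; rewrite IH. Qed.

Lemma delta_states_cat_states t u v : ds t (u ++ v) = ds t u ++ ds (rs u t) v.
Proof.
elim: t u v => [|i t IH] u v /=; first by rewrite rho_states_nil.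
by rewrite /delta_states /= -!/(ds t _) delta_word_cat IH rho_states_cons.
Qed.

Lemma rho_word_cat x s s' : rw x (s ++ s') = rw x s ++ rs (ds s [:: x]) s'.
Proof. by elim: s x => //= i s IH x; rewrite IH. Qed.

Lemma rho_states_cat_letters u s s' : rs u (s ++ s') = rs u s ++ rs (ds s u) s'.
Proof.
elim: u s s' => [|x u IH] s s' /=; first by rewrite delta_states_nil.
rewrite /rho_states /= -!/(rs u _) rho_word_cat IH -rho_states_cat.
by rewrite -delta_states_cat_states.
Qed.

Lemma take_rho_word k x s : take k (rw x s) = rw x (take k s).
Proof. by elim: s k x => [|i s IH] [|k] x //=; rewrite IH. Qed.

Lemma take_rho_states k u s : take k (rs u s) = rs u (take k s).
Proof. by elim: u s => //= x u IH s; rewrite IH take_rho_word. Qed.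

Lemma take_delta_states k t u : take k (ds t u) = ds t (take k u).
Proof.
have [hk|hk] := leqP k (size u); last first.
  by rewrite !take_oversize ?size_delta_states // ltnW.
rewrite -{1}(cat_take_drop k u) delta_states_cat_states take_size_cat //.
by rewrite size_delta_states size_takel.
Qed.

Lemma drop_delta_states k t u : drop k (ds t u) = ds (rs (take k u) t) (drop k u).
Proof.
have [hk|hk] := leqP k (size u); last first.
  by rewrite !drop_oversize ?size_delta_states ?delta_states_nil // ltnW.
rewrite -{1}(cat_take_drop k u) delta_states_cat_states drop_size_cat //.
by rewrite size_delta_states size_takel.
Qed.

Lemma same_comp_delta_states t u : sc u (ds t u).
Proof.
elim: t u => [|i t IH] u; first exact: rst_refl.
by apply: rst_trans (IH (dw i u)); apply: rst_step; exists i.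
Qed.

End Words.
Lemma finType_pigeonhole (T : finType) (g : nat -> T) :
  exists i j, [/\ i < j, j <= #|T| & g i = g j].
Proof.
apply: contrapT => noRep.
have inj : injective (fun i : 'I_#|T|.+1 => g i).
  move=> [i hi] [j hj] /= e; apply/val_inj => /=.
  by case: (ltngtP i j) => // h; case: noRep; [exists i, j | exists j, i].
by move: (leq_card _ inj); rewrite card_ord ltnn.
Qed.

Lemma iter_inj (T : Type) (f : T -> T) n : injective f -> injective (iter n f).
Proof. by move=> hf; elim: n => //= n IH x y /hf /IH. Qed.

Lemma deterministic_periodic (T : finType) (g : nat -> T) :
  (forall i j, g i = g j -> g i.+1 = g j.+1) -> g #|T| = g (#|T| + #|T|`!).
Proof.
move=> det; have [i [j [ltij leqjT eij]]] := finType_pigeonhole g.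
have shift r : g (i + r) = g (j + r).
  by elim: r => [|r IH]; rewrite ?addn0 ?addnS //; apply: det.
have period q k : i <= k -> g k = g (k + q * (j - i)).
  move=> hik; elim: q => [|q IH]; first by rewrite addn0.
  have -> : k + q.+1 * (j - i) = j + (k + q * (j - i) - i) by nia.
  by rewrite IH -shift subnKC // (leq_trans hik (leq_addr _ _)).
have /dvdnP [q ->] : j - i %| #|T|`!.
  by apply: dvdn_fact; rewrite subn_gt0 ltij (leq_trans (leq_subr _ _) leqjT).
by apply: period; rewrite (leq_trans (ltnW ltij)).
Qed.

Section SizePreserving.
Variables (T : finType) (f : seq T -> seq T).
Hypotheses (f_inj : injective f) (size_f : forall u, size (f u) = size u).

Lemma size_preserving_iter_returns u : exists r, iter r.+1 f u = u.
Proof.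
have size_iter i : size (iter i f u) == size u.
  by elim: i => //= i /eqP IH; rewrite size_f IH.
have [i [j [ltij _ e]]] := finType_pigeonhole (fun i => Tuple (size_iter i)).
exists (j - i).-1; rewrite prednK ?subn_gt0 //.
apply: (@iter_inj _ f i f_inj); rewrite -iterD subnKC ?(ltnW ltij) //.
by move: e => /(congr1 val) /= ->.
Qed.

Lemma size_preserving_surj u : exists v, f v = u.
Proof. by have [r hr] := size_preserving_iter_returns u; exists (iter r f u). Qed.

End SizePreserving.

Section Reversible.
Variables (Q S : finType) (delta : S -> Q -> Q) (rho : Q -> S -> S).
Hypothesis rho_inj : forall x, injective (rho x).
Hypothesis delta_inj : forall i, injective (delta i).

Local Notation rw := (rho_word delta rho).
Local Notation dw := (delta_word delta rho).
Local Notation rs := (rho_states delta rho).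
Local Notation sc := (same_comp delta rho).
Local Notation ds := (delta_states delta rho).

Lemma rho_word_inj x : injective (rw x).
Proof.
move=> s; elim: s x => [|i s IH] x [|j s'] //= [/rho_inj <-].
by move=> /IH ->.
Qed.

Lemma rho_states_inj u : injective (rs u).
Proof. by elim: u => //= x u IH s s' /IH; apply: rho_word_inj. Qed.

Lemma delta_word_inj i : injective (dw i).
Proof.
move=> u; elim: u i => [|x u IH] i [|y u'] //= [/delta_inj <-].
by move=> /IH ->.
Qed.

Lemma delta_states_inj t : injective (ds t).
Proof. by elim: t => //= i t IH u u' /IH; apply: delta_word_inj. Qed.

Lemma same_comp_size u v : sc u v -> size u = size v.
Proof.
elim=> //= [a b [i ->]|a b c _ -> _ ->] //.
by rewrite size_delta_word.
Qed.

Lemma delta_states_iter t k u : ds (flatten (nseq k t)) u = iter k (ds t) u.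
Proof. by elim: k u => //= k IH u; rewrite delta_states_cat IH -iterSr. Qed.

Lemma rho_states_iter t k s : rs (flatten (nseq k t)) s = iter k (rs t) s.
Proof. by elim: k s => //= k IH s; rewrite rho_states_cat IH -iterSr. Qed.

(* The inverse of an injective size-preserving map on words is one of its
   powers, so the symmetric steps of [same_comp] add nothing. *)
Lemma same_compP u v : sc u v <-> exists t, v = ds t u.
Proof.
split=> [|[t ->]]; last exact: same_comp_delta_states.
elim=> [a b [i ->]|a|a b _ [t ->]|a b c _ [t1 ->] _ [t2 ->]].
- by exists [:: i].
- by exists [::].
- have [r hr] := size_preserving_iter_returns (@delta_states_inj t)
    (@size_delta_states _ _ delta rho t) a.
  by exists (flatten (nseq r t)); rewrite delta_states_iter -iterSr.
- by exists (t1 ++ t2); rewrite delta_states_cat.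
Qed.

Lemma same_comp_sym u v : sc u v -> sc v u.
Proof. exact: rst_sym. Qed.

Lemma same_comp_trans u v w : sc u v -> sc v w -> sc u w.
Proof. exact: rst_trans. Qed.

Lemma same_comp_take k u v : sc u v -> sc (take k u) (take k v).
Proof.
by move=> /same_compP [t ->]; rewrite take_delta_states; apply: same_comp_delta_states.
Qed.

Lemma same_comp_drop k u v : sc u v -> sc (drop k u) (drop k v).
Proof.
by move=> /same_compP [t ->]; rewrite drop_delta_states; apply: same_comp_delta_states.
Qed.

Lemma same_comp_take_lift k a y :
  sc (take k a) y -> exists x, sc a x /\ take k x = y.
Proof.
move=> /same_compP [t ->]; exists (ds t a).
by rewrite take_delta_states; split=> //; apply: same_comp_delta_states.
Qed.

Lemma liftable_edge_suffix a b : size b <= size a ->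
  liftable_edge delta rho a b <-> sc b (drop (size a - size b) a).
Proof.
move=> le_ba; split=> [/(_ a (rst_refl _ _ _)) [p [w [-> hw]]] | hb w haw].
  by rewrite size_cat (same_comp_size hw) addnK drop_size_cat.
exists (take (size a - size b) w), (drop (size a - size b) w).
by rewrite cat_take_drop; split=> //; apply: same_comp_trans hb (same_comp_drop _ haw).
Qed.

Lemma label_one_take_inj a x y : label_one delta rho a -> sc a x -> sc a y ->
  take (size a).-1 x = take (size a).-1 y -> x = y.
Proof.
case size_a: (size a) => [|m].
  by move=> _ /same_comp_size + /same_comp_size; rewrite size_a => /esym/size0nil ->
    /esym/size0nil ->.
rewrite /label_one /comp_card size_a /= size_takel ?size_a //.
set A := [set t : m.+1.-tuple Q | _]; set A' := [set t : m.-tuple Q | _] => cardA.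
have size_take_m (t : m.+1.-tuple Q) : size (take m t) == m.
  by rewrite size_takel // size_tuple.
pose tk (t : m.+1.-tuple Q) : m.-tuple Q := Tuple (size_take_m t).
have tuple_of z : sc a z -> {t : m.+1.-tuple Q | t \in A & val t = z}.
  move=> hz; have size_z : size z == m.+1 by rewrite -(same_comp_size hz) size_a.
  by exists (Tuple size_z); rewrite // inE; apply/asboolP.
have tkA : tk @: A = A'.
  apply/setP => z; apply/imsetP/idP => [[t] | ].
    by rewrite !inE => /asboolP ht -> /=; apply/asboolP; apply: same_comp_take.
  rewrite inE => /asboolP /same_comp_take_lift [t [/tuple_of [t' ht' <-] tz]].
  by exists t' => //; apply/val_inj; rewrite /= tz.
have tk_inj : {in A &, injective tk} by apply/imset_injP; rewrite tkA cardA.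
move=> /tuple_of [tx hx' <-] /tuple_of [ty hy' <-] exy.
by rewrite (tk_inj _ _ hx' hy') //; apply/val_inj.
Qed.

End Reversible.

Lemma nth_rho_states (Q S : finType) (delta : S -> Q -> Q) (rho : Q -> S -> S)
    u t c s0 : c < size t ->
  nth s0 (rho_states delta rho u t) c =
  out_letter rho (delta_states delta rho (take c t) u) (nth s0 t c).
Proof.
move=> ltc; rewrite -{1}(cat_take_drop c t) (drop_nth s0) //.
by rewrite rho_states_cat_letters rho_states_cons nth_cat size_rho_states
  size_takel ?ltnn ?subnn // ltnW.
Qed.

Lemma take_mkseq (T : Type) (W : nat -> T) N m :
  N <= m -> take N (mkseq W m) = mkseq W N.
Proof. by move=> h; rewrite /mkseq -map_take take_iota (minn_idPl h). Qed.

Section Periodic.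
Variables (T : Type) (x0 : T) (w : seq T).

Definition periodic_word (i : nat) : T := nth x0 w (i %% size w).

Lemma periodic_wordD i : periodic_word (size w + i) = periodic_word i.
Proof. by rewrite /periodic_word modnDl. Qed.

Lemma mkseq_periodic_word m :
  0 < size w -> mkseq periodic_word (size w + m) = w ++ mkseq periodic_word m.
Proof.
move=> w_gt0; rewrite /mkseq iotaD map_cat add0n; congr (_ ++ _).
  rewrite -[RHS](mkseq_nth x0) /mkseq; apply/eq_in_map => i.
  by rewrite mem_iota add0n => /andP [_ hi]; rewrite /periodic_word modn_small.
rewrite -[size w]addn0 iotaDl -map_comp; apply: eq_map => i /=.
exact: periodic_wordD.
Qed.

End Periodic.

Section FiniteOrder.
Variables (Q S : finType) (delta : S -> Q -> Q) (rho : Q -> S -> S).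
Hypothesis rho_inj : forall x, injective (rho x).
Hypothesis delta_inj : forall i, injective (delta i).

Local Notation rs := (rho_states delta rho).
Local Notation sc := (same_comp delta rho).
Local Notation ds := (delta_states delta rho).

Lemma periodic_branch_self_liftable (W : nat -> Q) k :
  0 < k -> (forall i, W (k + i) = W i) -> self_liftable_branch delta rho W.
Proof.
move=> k_gt0 Wk; exists k; split=> // m.
apply/liftable_edge_suffix => //; rewrite /pref !size_mkseq ?ltnS ?leq_addr //.
rewrite subSS addKn -addSn addnC /mkseq iotaD map_cat add0n drop_size_cat;
  last by rewrite size_map size_iota.
rewrite -[k]addn0 iotaDl -map_comp.
by rewrite (eq_map (g := W) (fun i => Wk i)); apply: rst_refl.
Qed.

Definition take_inj_from (W : nat -> Q) (N : nat) : Prop :=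
  forall m, N <= m -> forall a b, sc (pref W m) a -> sc (pref W m) b ->
    take N a = take N b -> a = b.

Lemma eventually_label_one_take_inj (W : nat -> Q) N :
  (forall j, N <= j -> label_one delta rho (pref W j.+1)) -> take_inj_from W N.
Proof.
move=> labels; elim=> [|m IH] leNm a b ha hb eab.
  move: (same_comp_size ha) (same_comp_size hb); rewrite /pref size_mkseq.
  by move=> /esym/size0nil -> /esym/size0nil ->.
have [ltmN|leNm'] := ltnP m N.
  have eN : N = m.+1 by apply/eqP; rewrite eqn_leq leNm.
  by move: eab; rewrite eN !take_oversize // -?(same_comp_size ha)
    -?(same_comp_size hb) /pref size_mkseq.
apply: (label_one_take_inj delta_inj (labels m leNm') ha hb).
rewrite /pref size_mkseq /=; apply: IH => //.
- by rewrite -[pref W m](take_mkseq W (leqnSn m)); apply: same_comp_take.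
- by rewrite -[pref W m](take_mkseq W (leqnSn m)); apply: same_comp_take.
- by rewrite -!take_min !(minn_idPl leNm') eab.
Qed.

(* Follow one letter of t through the iterates of rho_w, together with the
   image of the first N letters of the branch under the letters preceding it:
   these pairs evolve deterministically, hence periodically. *)
Lemma rho_states_column (w : seq Q) (W : nat -> Q) N (t : seq S) c s0 :
  (forall m, pref W (size w + m) = w ++ pref W m) -> take_inj_from W N ->
  c < size t ->
  let B := #|{: S * N.-tuple Q}| in
  nth s0 (iter B (rs w) t) c = nth s0 (iter (B + B`!) (rs w) t) c.
Proof.
move=> prefW stable ltc B.
pose tj j := iter j (rs w) t.
have size_tj j : size (tj j) = size t.
  by elim: j => [|j IH]; rewrite ?iterS ?size_rho_states.
pose l j := nth s0 (tj j) c.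
pose Z j m := ds (take c (tj j)) (pref W m).
have ZD j m : Z j (size w + m) = ds (take c (tj j)) w ++ Z j.+1 m.
  by rewrite /Z prefW delta_states_cat_states -take_rho_states.
have lS j : l j.+1 = out_letter rho (ds (take c (tj j)) w) (l j).
  by rewrite /l /= nth_rho_states ?size_tj.
have size_Z j : size (Z j N) == N by rewrite size_delta_states /pref size_mkseq.
pose g j : S * N.-tuple Q := (l j, Tuple (size_Z j)).
suff /(congr1 fst) : g B = g (B + B`!) by [].
apply: deterministic_periodic => i j /eqP; rewrite xpair_eqE => /andP [/eqP el /eqP eZ].
have eZw : Z i (size w + N) = Z j (size w + N).
  apply: (stable (size w + N)); rewrite ?leq_addl //; try exact: same_comp_delta_states.
  by rewrite /Z !take_delta_states take_mkseq ?leq_addl //; move: eZ => /(congr1 val).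
move: eZw; rewrite !ZD => /eqP; rewrite eqseq_cat ?size_delta_states //.
move=> /andP [/eqP ew /eqP eZS]; rewrite /g !lS ew el.
by congr pair; apply: val_inj.
Qed.

Hypothesis no_asl : no_active_self_liftable_branch delta rho.

Lemma periodic_branch_take_inj (W : nat -> Q) k :
  0 < k -> (forall i, W (k + i) = W i) -> exists N, take_inj_from W N.
Proof.
move=> k_gt0 Wk.
have not_active : ~ active_branch delta rho W.
  by move=> act; apply: (no_asl (conj act (periodic_branch_self_liftable k_gt0 Wk))).
have [N labels] : exists N, forall j, N <= j -> label_one delta rho (pref W j.+1).
  exact: contrapT.
by exists N; apply: eventually_label_one_take_inj.
Qed.

Lemma rho_states_finite_order w : 0 < size w ->
  exists D, 0 < D /\ forall t, rs (flatten (nseq D w)) t = t.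
Proof.
case: w => [|x0 w'] // _; set w := x0 :: w'.
have [N stable] := periodic_branch_take_inj (W := periodic_word x0 w) (ltn0Sn _)
  (periodic_wordD x0 w).
set B := #|{: S * N.-tuple Q}|.
exists B`!; split=> [|t]; first exact: fact_gt0.
rewrite rho_states_iter; apply: (@iter_inj _ _ B (@rho_states_inj _ _ delta _ rho_inj w)).
rewrite -iterD; case: t => [|s0 t'].
  by rewrite !iter_fix // rho_states_nil.
have size_iter j : size (iter j (rs w) (s0 :: t')) = size (s0 :: t').
  by elim: j => [|j IH]; rewrite ?iterS ?size_rho_states.
apply: (@eq_from_nth _ s0) => [|c]; rewrite !size_iter // => ltc.
by apply/esym/(rho_states_column (W := periodic_word x0 w)) => // m;
  apply: mkseq_periodic_word.
Qed.

End FiniteOrder.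

Lemma card_fiber_sum (T1 T0 : finType) (f : T1 -> T0) (A : {set T1}) (P : pred T0) :
  #|[set b in A | P (f b)]| = \sum_(x | P x) #|[set b in A | f b == x]|.
Proof.
rewrite -sum1_card (partition_big f P); last by move=> b; rewrite inE => /andP [].
apply: eq_bigr => x Px; rewrite -sum1_card; apply: eq_bigl => b.
by rewrite !inE; case: (b \in A) => //=; case: (f b =P x) => [->|]; rewrite ?Px ?andbF.
Qed.

Section Degrees.
Variables (Q S : finType) (delta : S -> Q -> Q) (rho : Q -> S -> S).
Hypothesis rho_inj : forall x, injective (rho x).
Hypothesis delta_inj : forall i, injective (delta i).
Hypothesis delta_rho_inv_inj : forall j, injective (fun x => delta (rho_inv rho x j) x).

Local Notation rw := (rho_word delta rho).
Local Notation sc := (same_comp delta rho).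
Local Notation ds := (delta_states delta rho).

Lemma rho_invK x : cancel (rho x) (rho_inv rho x).
Proof.
move=> i; rewrite /rho_inv; case: pickP => [i' /eqP /rho_inj -> // | /(_ i)].
by rewrite eqxx.
Qed.

(* A path of A is determined by its end state and its output word; this is
   where the third condition of bireversibility enters. *)
Lemma rho_word_delta_states_inj s s' h h' : size s = size s' ->
  ds s [:: h] = ds s' [:: h'] -> rw h s = rw h' s' -> h = h'.
Proof.
elim/last_ind: s s' h h' => [|r i IH] s' h h'; first by case: s' => // _ [->].
case/lastP: s' => [|r' i']; first by rewrite size_rcons.
rewrite !size_rcons => -[size_r]; rewrite -!cats1 !delta_states_cat !rho_word_cat.
case eg: (ds r [:: h]) (size_delta_states delta rho r [:: h]) => [|g []] // _.
case eg': (ds r' [:: h']) (size_delta_states delta rho r' [:: h']) => [|g' []] // _.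
move=> [edg] /eqP; rewrite eqseq_cat ?size_rho_word // => /andP [/eqP er /eqP [ei]].
have gg' : g = g'.
  by apply: (delta_rho_inv_inj (j := rho g i)); rewrite /= {2}ei !rho_invK.
by move: ei; rewrite gg' => /rho_inj ii'; apply: (IH r') => //; rewrite eg eg' gg'.
Qed.

Variable ew : seq Q.
Local Notation n := (size ew).

(* The edges of a graph on the stems, from [take n b] to [drop 1 b]. *)
Definition comp_edge (b : seq Q) : Prop :=
  [/\ size b = n.+1, sc ew (take n b) & sc ew (drop 1 b)].

Lemma comp_edge_delta_states t b : comp_edge b -> comp_edge (ds t b).
Proof.
move=> [size_b src dst]; split; first by rewrite size_delta_states.
- by rewrite take_delta_states; apply: same_comp_trans src (same_comp_delta_states _ _ _ _).
- by rewrite drop_delta_states; apply: same_comp_trans dst (same_comp_delta_states _ _ _ _).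
Qed.

Lemma size_edge_src (b : n.+1.-tuple Q) : size (take n b) == n.
Proof. by rewrite size_takel // size_tuple. Qed.

Lemma size_edge_dst (b : n.+1.-tuple Q) : size (drop 1 b) == n.
Proof. by rewrite size_drop size_tuple subn1. Qed.

Definition edge_src (b : n.+1.-tuple Q) : n.-tuple Q := Tuple (size_edge_src b).
Definition edge_dst (b : n.+1.-tuple Q) : n.-tuple Q := Tuple (size_edge_dst b).

Definition comp_edges : {set n.+1.-tuple Q} := [set b : n.+1.-tuple Q | `[< comp_edge b >]].
Definition out_degree (x : n.-tuple Q) := #|[set b in comp_edges | edge_src b == x]|.
Definition in_degree (x : n.-tuple Q) := #|[set b in comp_edges | edge_dst b == x]|.

Lemma delta_states_between (x y : n.-tuple Q) :
  sc ew x -> sc ew y -> exists t, val y = ds t x.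
Proof.
by move=> hx hy; apply/same_compP => //; apply: same_comp_trans (same_comp_sym hx) hy.
Qed.

Lemma out_degree_le (x y : n.-tuple Q) : sc ew x -> sc ew y -> out_degree x <= out_degree y.
Proof.
move=> hx hy; have [t ht] := delta_states_between hx hy.
have size_phi (b : n.+1.-tuple Q) : size (ds t b) == n.+1.
  by rewrite size_delta_states size_tuple.
pose phi (b : n.+1.-tuple Q) : n.+1.-tuple Q := Tuple (size_phi b).
have phi_inj : injective phi.
  by move=> b b' /(congr1 val) /= /(delta_states_inj delta_inj) /val_inj.
rewrite /out_degree -(card_imset _ phi_inj); apply: subset_leq_card.
apply/subsetP => z /imsetP [b]; rewrite !inE => /andP [/asboolP hb /eqP hbx] ->.
apply/andP; split; first by apply/asboolP; apply: comp_edge_delta_states.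
by apply/eqP/val_inj; rewrite /= take_delta_states ht -hbx.
Qed.

Lemma rho_word_surj h s : exists s', rw h s' == s.
Proof.
have [s' <-] := size_preserving_surj (@rho_word_inj _ _ delta _ rho_inj h)
  (@size_rho_word _ _ delta rho h) s.
by exists s'.
Qed.

Definition rho_word_pre h s := xchoose (rho_word_surj h s).

Lemma rho_word_preK h s : rw h (rho_word_pre h s) = s.
Proof. exact/eqP/(xchooseP (rho_word_surj h s)). Qed.

Lemma size_rho_word_pre h s : size (rho_word_pre h s) = size s.
Proof. by rewrite -[in RHS](rho_word_preK h s) size_rho_word. Qed.

(* Transport an edge b by the input word that sends [drop 1 b] along t. *)
Lemma in_degree_le (x y : n.-tuple Q) : sc ew x -> sc ew y -> in_degree x <= in_degree y.
Proof.
move=> hx hy; have [t ht] := delta_states_between hx hy.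
pose sb (b : n.+1.-tuple Q) := rho_word_pre (thead b) t.
have size_psi (b : n.+1.-tuple Q) : size (ds (sb b) b) == n.+1.
  by rewrite size_delta_states size_tuple.
pose psi (b : n.+1.-tuple Q) : n.+1.-tuple Q := Tuple (size_psi b).
have headE (b : n.+1.-tuple Q) : val b = thead b :: drop 1 b.
  by case: b => [[|h b'] hb] //=; rewrite drop0 /thead (tnth_nth h).
have psiE b : val (psi b) = ds (sb b) [:: thead b] ++ ds t (drop 1 b).
  by rewrite /= {1}headE -cat1s delta_states_cat_states rho_states1 rho_word_preK.
have psi_inj : {in [set b in comp_edges | edge_dst b == x] &, injective psi}.
  move=> b b'; rewrite !inE => /andP [_ /eqP /(congr1 val) /= hb].
  move=> /andP [_ /eqP /(congr1 val) /= hb'] /(congr1 val).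
  rewrite !psiE hb hb' => /eqP; rewrite eqseq_cat ?size_delta_states // => /andP [/eqP e _].
  have hh : thead b = thead b'.
    apply: (rho_word_delta_states_inj _ e); last by rewrite !rho_word_preK.
    by rewrite !size_rho_word_pre.
  by apply/val_inj; rewrite headE [RHS]headE hh hb hb'.
rewrite /in_degree -(card_in_imset psi_inj); apply: subset_leq_card.
apply/subsetP => z /imsetP [b]; rewrite !inE => /andP [/asboolP [size_b src dst] /eqP hbx] ->.
have psi_dst : drop 1 (psi b) = ds t (drop 1 b).
  by rewrite psiE drop_size_cat // size_delta_states.
apply/andP; split; last by apply/eqP/val_inj; rewrite /= psi_dst ht -hbx.
apply/asboolP; split; first by rewrite size_tuple.
- by rewrite /= take_delta_states; apply: same_comp_trans src (same_comp_delta_states _ _ _ _).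
- by rewrite psi_dst; apply: same_comp_trans dst (same_comp_delta_states _ _ _ _).
Qed.

Local Notation ewt := (in_tuple ew).

Lemma card_comp_edges_src (P : pred (n.-tuple Q)) : (forall x, P x -> sc ew x) ->
  #|[set b in comp_edges | P (edge_src b)]| = #|P| * out_degree ewt.
Proof.
move=> Pstem; rewrite card_fiber_sum -sum_nat_const; apply: eq_bigr => x /Pstem hx.
by apply/eqP; rewrite eqn_leq !out_degree_le //; apply: rst_refl.
Qed.

Lemma card_comp_edges_dst (P : pred (n.-tuple Q)) : (forall x, P x -> sc ew x) ->
  #|[set b in comp_edges | P (edge_dst b)]| = #|P| * in_degree ewt.
Proof.
move=> Pstem; rewrite card_fiber_sum -sum_nat_const; apply: eq_bigr => x /Pstem hx.
by apply/eqP; rewrite eqn_leq !in_degree_le //; apply: rst_refl.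
Qed.

Lemma out_degree_eq_in_degree : out_degree ewt = in_degree ewt.
Proof.
pose stems : pred (n.-tuple Q) := fun x => `[< sc ew x >].
have stemsP x : stems x -> sc ew x by move/asboolP.
have all_edges (f : n.+1.-tuple Q -> n.-tuple Q) :
    (forall b : n.+1.-tuple Q, comp_edge b -> sc ew (f b)) ->
    [set b in comp_edges | stems (f b)] = comp_edges.
  move=> hf; apply/setP => b; rewrite !inE; apply/andb_idr => /asboolP /hf hb.
  exact/asboolP.
have := card_comp_edges_dst stemsP; rewrite all_edges; last by move=> b [].
rewrite -(all_edges edge_src); last by move=> b [].
rewrite card_comp_edges_src // => /eqP; rewrite eqn_pmul2l // => [/eqP //|].
by apply/card_gt0P; exists ewt; apply/asboolP; apply: rst_refl.
Qed.

(* Since in- and out-degrees are equal and constant on the stems, a set of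
   stems closed under forward edges is closed under backward edges too. *)
Lemma comp_edge_backward (X : pred (seq Q)) : (forall y, X y -> sc ew y) ->
  (forall b, comp_edge b -> X (take n b) -> X (drop 1 b)) ->
  forall b, comp_edge b -> X (drop 1 b) -> X (take n b).
Proof.
move=> Xstem Xfwd b hb Xb.
pose P : pred (n.-tuple Q) := fun x => X x.
have Pstem x : P x -> sc ew x by apply: Xstem.
have sub : [set c in comp_edges | P (edge_src c)] \subset
            [set c in comp_edges | P (edge_dst c)].
  apply/subsetP => c; rewrite !inE => /andP [hc Pc]; rewrite hc.
  by move: hc => /asboolP /Xfwd; apply.
have card_eq : #|[set c in comp_edges | P (edge_src c)]| =
                #|[set c in comp_edges | P (edge_dst c)]|.
  by rewrite card_comp_edges_src // card_comp_edges_dst // out_degree_eq_in_degree.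
have size_b : size b == n.+1 by case: hb => ->.
have := elimT (subset_cardP card_eq) sub (Tuple size_b); rewrite !inE.
have -> : `[< comp_edge (Tuple size_b) >] by apply/asboolP.
by rewrite /P /= Xb.
Qed.

End Degrees.

Section Walks.
Variables (Q S : finType) (delta : S -> Q -> Q) (rho : Q -> S -> S).
Hypothesis rho_inj : forall x, injective (rho x).
Hypothesis delta_inj : forall i, injective (delta i).
Hypothesis delta_rho_inv_inj : forall j, injective (fun x => delta (rho_inv rho x j) x).

Local Notation sc := (same_comp delta rho).

Variable ew : seq Q.
Local Notation n := (size ew).
Local Notation comp_edge := (comp_edge delta rho ew).

(* A walk in the graph of stems, read off a word through its length-n windows. *)
Definition comp_walk (w : seq Q) : Prop :=
  forall i, i + n <= size w -> sc ew (take n (drop i w)).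

Definition last_window (w : seq Q) : seq Q := drop (size w - n) w.

Lemma stem_size u : sc ew u -> size u = n.
Proof. by move/same_comp_size. Qed.

Lemma comp_walk_stem u : sc ew u -> comp_walk u.
Proof.
move=> hu i; rewrite (stem_size hu) => hi.
have -> : i = 0 by lia.
by rewrite drop0 take_oversize ?(stem_size hu).
Qed.

Lemma comp_walk_glue a v b : size v = n ->
  comp_walk (a ++ v) -> comp_walk (v ++ b) -> comp_walk (a ++ v ++ b).
Proof.
move=> size_v wa wb i; rewrite !size_cat size_v => hi.
have [hia|hia] := ltnP i (size a).
  rewrite catA drop_cat size_cat size_v ifT; last by lia.
  rewrite takel_cat; last by rewrite size_drop size_cat size_v; lia.
  by apply: wa; rewrite size_cat size_v; lia.
by rewrite drop_cat ltnNge hia /=; apply: wb; rewrite size_cat size_v; lia.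
Qed.

Lemma comp_walk_take j w : comp_walk w -> comp_walk (take j w).
Proof.
move=> hw i; rewrite size_take => hi.
have hij : i + n <= j by move: hi; case: ltnP; lia.
have -> : drop i (take j w) = take (j - i) (drop i w).
  by rewrite take_drop subnK //; lia.
by rewrite take_takel; [apply: hw; move: hi; case: ltnP; lia | lia].
Qed.

Lemma comp_edgeE b : comp_edge b <-> size b = n.+1 /\ comp_walk b.
Proof.
split=> [[size_b src dst]|[size_b wb]].
  split=> // -[|[|i]]; rewrite size_b => hi; last by lia.
  - by rewrite drop0.
  - by rewrite take_oversize // size_drop size_b subn1.
split=> //; first by rewrite -[b]drop0; apply: wb; rewrite size_b.
rewrite -[drop 1 b](take_oversize (n := n)) ?size_drop ?size_b ?subn1 //.
by apply: wb; rewrite size_b add1n.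
Qed.

Lemma last_window_stem w : comp_walk w -> n <= size w -> sc ew (last_window w).
Proof.
move=> hw hs; rewrite /last_window -[drop _ w](take_oversize (n := n)).
  by apply: hw; lia.
by rewrite size_drop; lia.
Qed.

Lemma last_window_cat a w : n <= size w -> last_window (a ++ w) = last_window w.
Proof.
move=> h; rewrite /last_window drop_cat size_cat ifF; last by apply/negbTE; lia.
by congr drop; lia.
Qed.

Hypothesis n_gt0 : 0 < n.

Lemma comp_walk_backward (X : seq Q -> Prop) :
  (forall b, comp_edge b -> X (drop 1 b) -> X (take n b)) ->
  forall w, comp_walk w -> n <= size w -> X (last_window w) -> X (take n w).
Proof.
move=> Xback; elim/last_ind => [|w x IH] hw; first by rewrite leqNgt n_gt0.
rewrite size_rcons => hs hX.
have [ltwn|lenw] := ltnP (size w) n.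
  move: hX; rewrite /last_window size_rcons.
  have -> : (size w).+1 - n = 0 by lia.
  by rewrite drop0 take_oversize // size_rcons.
have ww : comp_walk w.
  by rewrite -(take_size_cat [:: x] (erefl (size w))) cats1; apply: comp_walk_take.
rewrite -cats1 takel_cat //; apply: IH => //.
set b := drop (size w - n) (rcons w x).
have hb : comp_edge b.
  apply/comp_edgeE; split=> [|i]; rewrite size_drop size_rcons; first by lia.
  by move=> hi; rewrite /b drop_drop; apply: hw; rewrite size_rcons; lia.
have <- : take n b = last_window w.
  rewrite /b /last_window -cats1 drop_cat ifT; last by lia.
  by rewrite take_size_cat // size_drop; lia.
apply: Xback => //; move: hX; rewrite /b /last_window drop_drop size_rcons.
have -> // : 1 + (size w - n) = (size w).+1 - n by lia.
Qed.

(* The stems at both ends may overlap, which makes [reach] reflexive. *)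
Definition reach (v y : seq Q) : Prop :=
  exists w, [/\ comp_walk w, n <= size w, take n w = v & last_window w = y].

Lemma reach_refl v : sc ew v -> reach v v.
Proof.
move=> hv; exists v; split; rewrite ?(stem_size hv) //; first exact: comp_walk_stem.
- by rewrite take_oversize // (stem_size hv).
- by rewrite /last_window (stem_size hv) subnn drop0.
Qed.

Lemma reach_edge v b : reach v (take n b) -> comp_edge b -> reach v (drop 1 b).
Proof.
move=> [w [hw hs wv wy]] hb; have [size_b wb] := (comp_edgeE b).1 hb.
set a := take (size w - n) w.
have wE : w = a ++ take n b by rewrite -wy cat_take_drop.
have bE : b = take n b ++ drop n b by rewrite cat_take_drop.
have size_y : size (take n b) = n by rewrite size_takel // size_b.
exists (a ++ take n b ++ drop n b); split.
- by apply: comp_walk_glue => //; rewrite -?wE -?bE.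
- by rewrite !size_cat; lia.
- by rewrite catA takel_cat -?wE // size_cat; lia.
- by rewrite -bE last_window_cat ?size_b // /last_window size_b subSnn.
Qed.

Lemma reach_stem v y : reach v y -> sc ew y.
Proof. by move=> [w [hw hs _ <-]]; apply: last_window_stem. Qed.

Lemma reach_sym u v : reach u v -> reach v u.
Proof.
move=> [w [hw hs wu wv]]; rewrite -wu.
have hv : sc ew v by rewrite -wv; apply: last_window_stem.
apply: (comp_walk_backward (X := reach v)) => //; last by rewrite wv; apply: reach_refl.
move=> b hb rb; apply/asboolP.
apply: (comp_edge_backward rho_inj delta_inj delta_rho_inv_inj
  (X := fun y => `[< reach v y >])) hb _; last exact/asboolP.
- by move=> y /asboolP; apply: reach_stem.
- by move=> b' hb' /asboolP rb'; apply/asboolP; apply: reach_edge.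
Qed.

End Walks.

Lemma flatten_nseqS (T : Type) k (a : seq T) :
  flatten (nseq k.+1 a) = flatten (nseq k a) ++ a.
Proof. by rewrite -addn1 nseqD flatten_cat /= cats0. Qed.

Lemma flatten_nseq_rot (T : Type) k (a b : seq T) :
  a ++ flatten (nseq k (b ++ a)) = flatten (nseq k (a ++ b)) ++ a.
Proof.
elim: k => [|k IH]; first by rewrite /= cats0.
by rewrite !flatten_nseqS catA IH -!catA.
Qed.

Lemma size_flatten_nseq (T : Type) k (a : seq T) : size (flatten (nseq k a)) = k * size a.
Proof. by elim: k => //= k IH; rewrite size_cat IH mulSn. Qed.

Section StemRelation.
Variables (Q S : finType) (delta : S -> Q -> Q) (rho : Q -> S -> S).
Hypothesis rho_inj : forall x, injective (rho x).
Hypothesis delta_inj : forall i, injective (delta i).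
Hypothesis delta_rho_inv_inj : forall j, injective (fun x => delta (rho_inv rho x j) x).

Local Notation rs := (rho_states delta rho).
Local Notation sc := (same_comp delta rho).
Local Notation ds := (delta_states delta rho).

Variable ew : seq Q.
Local Notation n := (size ew).
Hypothesis n_gt0 : 0 < n.
Hypothesis comp_edge_exists : exists b, comp_edge delta rho ew b.

Local Notation comp_walk := (comp_walk delta rho ew).
Local Notation last_window := (@last_window Q ew).
Local Notation reach := (reach delta rho ew).

Lemma walk_reach u s v : sc ew u -> comp_walk (u ++ s ++ v) -> sc ew v -> reach u v.
Proof.
move=> hu w hv; exists (u ++ s ++ v); split=> //.
- by rewrite !size_cat (stem_size hu); lia.
- by rewrite takel_cat ?take_oversize ?(stem_size hu).
- rewrite catA last_window_cat ?(stem_size hv) //.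
  by rewrite /last_window (stem_size hv) subnn drop0.
Qed.

Lemma comp_walk_repeat u c :
  sc ew u -> comp_walk (u ++ c) -> last_window (u ++ c) = u -> forall k,
  comp_walk (u ++ flatten (nseq k c)) /\ last_window (u ++ flatten (nseq k c)) = u.
Proof.
move=> hu wuc luc; elim=> [|k [IH1 IH2]].
  rewrite cats0 /last_window (stem_size hu) subnn drop0.
  by split=> //; apply: comp_walk_stem.
set Y := u ++ flatten (nseq k c).
have YE : Y = take (size Y - n) Y ++ u by rewrite -{1}IH2 cat_take_drop.
have -> : u ++ flatten (nseq k.+1 c) = take (size Y - n) Y ++ u ++ c.
  by rewrite flatten_nseqS catA -/Y {1}YE catA.
split; first by apply: comp_walk_glue; rewrite -?YE ?(stem_size hu).
by rewrite last_window_cat // size_cat (stem_size hu) leq_addr.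
Qed.

Lemma split_end_windows w :
  2 * n <= size w -> w = take n w ++ drop n (take (size w - n) w) ++ last_window w.
Proof.
move=> h; rewrite catA -{1}(@take_takel _ n (size w - n) w); last by lia.
by rewrite !cat_take_drop.
Qed.

Lemma stem_loop u : sc ew u -> exists s, comp_walk (u ++ s ++ u).
Proof.
move=> hu; have [b0 hb0] := comp_edge_exists; have [_ src0 _] := hb0.
have [t ut] := (same_compP rho delta_inj _ _).1 (same_comp_trans (same_comp_sym src0) hu).
set b := ds t b0.
have hb : comp_edge delta rho ew b by apply: comp_edge_delta_states.
have [size_b wb] := (comp_edgeE delta rho ew b).1 hb.
have bu : take n b = u by rewrite take_delta_states ut.
have [w2 [ww2 size_w2 w2v w2u]] : reach (drop 1 b) u.
  apply: (reach_sym rho_inj delta_inj delta_rho_inv_inj n_gt0).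
  exists b; split; rewrite ?size_b //.
  by rewrite /last_window size_b subSnn.
have w2E : w2 = drop 1 b ++ drop n w2 by rewrite -w2v cat_take_drop.
set c := drop n b ++ drop n w2.
have Yu : b ++ drop n w2 = u ++ c by rewrite catA -{1}(cat_take_drop n b) bu.
have wY : comp_walk (u ++ c).
  rewrite -Yu -(cat_take_drop 1 b) -catA; apply: comp_walk_glue.
  - by rewrite size_drop size_b subn1.
  - by rewrite cat_take_drop.
  - by rewrite -w2E.
have lY : last_window (u ++ c) = u.
  by rewrite -Yu -(cat_take_drop 1 b) -catA -w2E last_window_cat.
have [wYn lYn] := comp_walk_repeat hu wY lY n.
have size_Yn : 2 * n <= size (u ++ flatten (nseq n c)).
  rewrite size_cat size_flatten_nseq (stem_size hu) size_cat size_drop size_b subSnn; nia.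
exists (drop n (take (size (u ++ flatten (nseq n c)) - n) (u ++ flatten (nseq n c)))).
have Ynu : take n (u ++ flatten (nseq n c)) = u.
  by rewrite takel_cat ?take_oversize ?(stem_size hu).
have Yn_split := split_end_windows size_Yn; rewrite Ynu lYn in Yn_split.
by rewrite -Yn_split.
Qed.

Lemma jword_comp_walk w : sc ew (take n w) -> jword delta rho ew w <-> comp_walk w.
Proof.
move=> hu; have size_w : n <= size w by rewrite -{1}(stem_size hu) size_take_min geq_minr.
split=> [jw i hi | ww j /andP [j_gt0 le_jw]].
  case: i hi => [|i] hi; first by rewrite drop0.
  have := jw (i.+1 + n); rewrite hi addn_gt0 /= => /(_ erefl) [[]|[_ _]].
    by move=> + _; rewrite size_take_min; lia.
  have size_t : size (take (i.+1 + n) w) = i.+1 + n by rewrite size_takel.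
  move=> /(liftable_edge_suffix rho delta_inj); rewrite size_t addnK leq_addl.
  by rewrite addnC -take_drop; apply.
have [le_jn|lt_nj] := leqP j n.
  left; rewrite size_takel //; split=> //.
  by rewrite -(take_takel _ le_jn); apply/same_comp_take/same_comp_sym.
right; rewrite size_takel //; split=> //.
  by rewrite take_takel ?(ltnW lt_nj) //; apply: same_comp_sym.
apply/(liftable_edge_suffix rho delta_inj); rewrite size_takel // ?(ltnW lt_nj) //.
rewrite -[j in take j w](subnKC (ltnW lt_nj)) -take_drop.
by apply: ww; rewrite subnK // ltnW.
Qed.

Lemma comp_walk_loop_repeat a c : sc ew a -> comp_walk (a ++ c ++ a) ->
  forall k, comp_walk (flatten (nseq k (a ++ c)) ++ a).
Proof.
move=> ha wa; elim=> [|k IH]; first exact: comp_walk_stem.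
rewrite -flatten_nseq_rot in IH; rewrite -flatten_nseq_rot /= -!catA.
by rewrite catA; apply: comp_walk_glue; rewrite ?(stem_size ha) -?catA.
Qed.

Hypothesis rho_finite_order : forall w, 0 < size w ->
  exists D, 0 < D /\ forall t, rs (flatten (nseq D w)) t = t.

(* Going D times around a loop v c v, for D the order of rho_{vc}. *)
Lemma closed_walk_pump v c : sc ew v -> comp_walk (v ++ c ++ v) ->
  exists p, comp_walk (v ++ p ++ c ++ v) /\ forall t, rs (v ++ p ++ c) t = t.
Proof.
move=> hv wv.
have size_vc : 0 < size (v ++ c) by rewrite size_cat (stem_size hv) addn_gt0 n_gt0.
have [[|D] [// _ rhoD]] := rho_finite_order size_vc.
have vpcE : v ++ flatten (nseq D (c ++ v)) ++ c = flatten (nseq D.+1 (v ++ c)).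
  by rewrite catA flatten_nseq_rot -catA -flatten_nseqS.
exists (flatten (nseq D (c ++ v))); split=> [|t]; last by rewrite vpcE.
by rewrite 2!catA -(catA v) vpcE; apply: comp_walk_loop_repeat.
Qed.

Lemma reach_walk v u : reach v u -> exists s, comp_walk (v ++ s ++ u).
Proof.
move=> /[dup] /reach_stem hu [w [ww size_w wv wu]]; have [s0 ws0] := stem_loop hu.
exists (drop n w ++ s0).
have wE : w = take (size w - n) w ++ u by rewrite -wu cat_take_drop.
rewrite -catA catA -{1}wv cat_take_drop {1}wE -catA.
by apply: comp_walk_glue; rewrite -?wE ?(stem_size hu).
Qed.

Lemma take_stem_cat u w : sc ew u -> take n (u ++ w) = u.
Proof. by move=> hu; rewrite takel_cat ?take_oversize ?(stem_size hu). Qed.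

Lemma stem_rel_refl u : sc ew u -> stem_rel delta rho ew u u.
Proof.
move=> hu; have [s0 ws0] := stem_loop hu.
have [p [wp rhop]] := closed_walk_pump hu ws0.
exists (p ++ s0); split=> //.
by apply/jword_comp_walk; rewrite -?catA // take_stem_cat.
Qed.

Lemma stem_rel_sym u v : sc ew u -> sc ew v ->
  stem_rel delta rho ew u v -> stem_rel delta rho ew v u.
Proof.
move=> hu hv [s [js rhos]].
have wus : comp_walk (u ++ s ++ v) by apply/jword_comp_walk; rewrite ?take_stem_cat.
have [s1 wvs1u] := reach_walk (reach_sym rho_inj delta_inj delta_rho_inv_inj n_gt0
  (walk_reach hu wus hv)).
have wloop : comp_walk (v ++ (s1 ++ u ++ s) ++ v).
  by rewrite -!catA catA; apply: comp_walk_glue; rewrite ?catA -?catA ?(stem_size hu).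
have [p [wp rhop]] := closed_walk_pump hv wloop.
exists (p ++ s1); split=> [|t].
  apply/jword_comp_walk; rewrite ?take_stem_cat //.
  have wpre : comp_walk ((v ++ (p ++ s1) ++ u) ++ s ++ v) by rewrite -!catA in wp *.
  by have := comp_walk_take (j := size (v ++ (p ++ s1) ++ u)) wpre; rewrite take_size_cat.
have loopE : v ++ p ++ s1 ++ u ++ s = (v ++ p ++ s1) ++ u ++ s by rewrite -!catA.
by move: (rhop t); rewrite loopE rho_states_cat rhos.
Qed.

Lemma stem_rel_trans u v w : sc ew u -> sc ew v ->
  stem_rel delta rho ew u v -> stem_rel delta rho ew v w -> stem_rel delta rho ew u w.
Proof.
move=> hu hv [s1 [js1 rho1]] [s2 [js2 rho2]].
have w1 : comp_walk (u ++ s1 ++ v) by apply/jword_comp_walk; rewrite ?take_stem_cat.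
have w2 : comp_walk (v ++ s2 ++ w) by apply/jword_comp_walk; rewrite ?take_stem_cat.
exists (s1 ++ v ++ s2); split=> [|t]; last by rewrite catA rho_states_cat rho2 rho1.
apply/jword_comp_walk; rewrite ?take_stem_cat // -!catA catA.
by apply: comp_walk_glue; rewrite -?catA ?(stem_size hv).
Qed.

End StemRelation.

Theorem lemma5p10 (Q S : finType) (delta : S -> Q -> Q) (rho : Q -> S -> S)
  (HQ : 0 < #|Q|) (HS : 0 < #|S|)
  (Hbirev : bireversible delta rho)
  (Hconn : connected_automaton delta)
  (Hnoasl : no_active_self_liftable_branch delta rho)
  (ew : seq Q) (Hj : jungle_path delta rho ew) :
  [/\ (forall u, stem delta rho ew u -> stem_rel delta rho ew u u),
      (forall u v, stem delta rho ew u -> stem delta rho ew v ->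
         stem_rel delta rho ew u v -> stem_rel delta rho ew v u)
    & (forall u v w, stem delta rho ew u -> stem delta rho ew v ->
         stem delta rho ew w ->
         stem_rel delta rho ew u v -> stem_rel delta rho ew v w ->
         stem_rel delta rho ew u w)].
Proof.
have [rho_inj delta_inj delta_rho_inv_inj] := Hbirev.
have [n_gt0 _ [b [_ [[size_b src lift] _ _]]] _] := Hj.
have edge : exists b, comp_edge delta rho ew b.
  exists b; split=> //; first exact: same_comp_sym.
  by move: lift => /(liftable_edge_suffix rho delta_inj); rewrite size_b subSnn leqnSn; apply.
have order := rho_states_finite_order rho_inj delta_inj Hnoasl.
split=> [u|u v|u v w].
- exact: (stem_rel_refl rho_inj delta_inj delta_rho_inv_inj n_gt0 edge order (u := u)).
- exact: (stem_rel_sym rho_inj delta_inj delta_rho_inv_inj n_gt0 edge order (u := u) (v := v)).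
- by move=> hu hv _; apply: stem_rel_trans.
Qed.
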